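(* Let $P$ be a span program on $n$ variables over $\mathbb{C}$ with target vector $t=(1,0,\dots,0)\in\mathbb{C}^m$, grouped input vectors $v_j\in\mathbb{C}^m$ for $j\in J$, and literal sets $X_j$. Let $G_P$ be its associated weighted bipartite graph. Fix an input $x\in\{0,1\}^n$. Define $G_P(x)$ by deleting from $G_P$ every input edge $(a_j,b_i)$ such that the literal of $X_j$ indexed by $i\in I_j$ evaluates to true on $x$. Let $H$ be the Hermitian weighted adjacency matrix of $G_P(x)$. Consider the system of linear equations $\sum_u H_{v,u}\psi(u)=0$ for every vertex $v$ of $G_P(x)$ except $v=a_O$, in the unknown vector $\psi\in\mathbb{C}^{V(G_P)}$. Then: (i) this system has a solution with $\psi(a_O)\neq 0$ if and only if $f_P(x)=1$; (ii) this system has a solution with $\psi(b_O)\neq 0$ if and only if $f_P(x)=0$.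
   Context: A span program $P$ over $\mathbb{C}$ on $n$ Boolean variables consists of a nonzero target vector $t\in\mathbb{C}^m$ and vectors $v_j\in\mathbb{C}^m$ indexed by a finite set $J$. Each $v_j$ is labeled by a subset $X_j$ of the literals $\{x_1,\overline{x_1},\dots,x_n,\overline{x_n}\}$. The function $f_P:\{0,1\}^n\to\{0,1\}$ is defined by $f_P(x)=1$ iff there are coefficients $a_j\in\mathbb{C}$ with $\sum_j a_jv_j=t$ and $a_j=0$ whenever some literal in $X_j$ is false on $x$. For each $j$, let $I_j$ be an index set in bijection with $X_j$, and let $I=\bigsqcup_j I_j$ be their disjoint union. Let $C=\{2,\dots,m\}$ index the coordinates other than the first. The graph $G_P$ has vertex set $\{a_O,b_O\}\cup\{a_j:j\in J\}\cup\{b_c:c\in C\}\cup\{b_i:i\in I\}$. Its weighted edges are: - the output edge $(a_O,b_O)$ with weight $1$; - edges $(b_O,a_j)$ with weight $(v_j)_1$; - edges $(b_c,a_j)$ with weight $(v_j)_c$; - input edges $(a_j,b_i)$ for $i\in I_j$ with weight $1$. The Hermitian weighted adjacency matrix $H$ has $H_{b,a}=w$ and $H_{a,b}=\overline{w}$ for each edge between a $b$-vertex $b$ and an $a$-vertex $a$ of weight $w$. All other entries are $0$. *)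

From HB Require Import structures.
From mathcomp Require Import all_boot all_algebra.
From mathcomp Require Import reals complex.
Set Implicit Arguments. Unset Strict Implicit. Unset Printing Implicit Defensive.
Import GRing.Theory Num.Theory.
Local Open Scope ring_scope.

(* Literals on n Boolean variables: (k, true) is x_k, (k, false) is ~x_k. *)
Definition lit (n : nat) : finType := ('I_n * bool)%type.

Definition lit_true (n : nat) (x : 'I_n -> bool) (l : lit n) : bool :=
  x l.1 == l.2.

Section SpanProgram.
Variables (C : numClosedFieldType) (n m : nat) (J : finType).
(* Span program on n variables in C^(m.+1) (coordinates 0..m; coordinate 0 is
   the paper's "first" coordinate), input vectors v j, literal sets X j. *)
Variables (v : J -> 'cV[C]_m.+1) (X : J -> {set lit n}).

Definition target : 'cV[C]_m.+1 := \col_i (i == ord0)%:R.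

Definition fP (x : 'I_n -> bool) : Prop :=
  exists a : J -> C,
    \sum_j a j *: v j = target /\
    forall j, [exists l in X j, ~~ lit_true x l] -> a j = 0.

(* I_j is (in bijection with) X_j; I is their disjoint union. *)
Definition Iset : finType := {j : J & {l : lit n | l \in X j}}.

(* Vertices of G_P.  Vb c, c : 'I_m, is b_c for the coordinate lift ord0 c
   (i.e. the coordinates other than the first). *)
Inductive vertex :=
| VaO | VbO | Va of J | Vb of 'I_m | Vi of Iset.

Definition vertex_enc (u : vertex) :
    (bool + J + 'I_m + Iset)%type :=
  match u with
  | VaO => inl (inl (inl true))
  | VbO => inl (inl (inl false))
  | Va j => inl (inl (inr j))
  | Vb c => inl (inr c)
  | Vi i => inr i
  end.

Definition vertex_dec (s : (bool + J + 'I_m + Iset)%type) : vertex :=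
  match s with
  | inl (inl (inl true)) => VaO
  | inl (inl (inl false)) => VbO
  | inl (inl (inr j)) => Va j
  | inl (inr c) => Vb c
  | inr i => Vi i
  end.

Lemma vertex_encK : cancel vertex_enc vertex_dec.
Proof. by case. Qed.

HB.instance Definition _ := Finite.copy vertex (can_type vertex_encK).

Definition Hx (x : 'I_n -> bool) (u w : vertex) : C :=
  match u, w with
  | VbO, VaO => 1
  | VaO, VbO => 1^*
  | VbO, Va j => v j ord0 ord0
  | Va j, VbO => (v j ord0 ord0)^*
  | Vb c, Va j => v j (lift ord0 c) ord0
  | Va j, Vb c => (v j (lift ord0 c) ord0)^*
  | Vi i, Va j => if (tag i == j) && ~~ lit_true x (val (tagged i)) then 1 else 0
  | Va j, Vi i => if (tag i == j) && ~~ lit_true x (val (tagged i)) then 1^* else 0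
  | _, _ => 0
  end.

Definition solves (x : 'I_n -> bool) (psi : vertex -> C) : Prop :=
  forall w : vertex, w != VaO -> \sum_(u : vertex) Hx x w u * psi u = 0.

End SpanProgram.

From Pilot Require Import Defs.
From HB Require Import structures.
From mathcomp Require Import all_boot all_algebra.
From mathcomp Require Import reals complex.
Set Implicit Arguments. Unset Strict Implicit. Unset Printing Implicit Defensive.
Import GRing.Theory Num.Theory.
Local Open Scope ring_scope.

(* The rows of H at the b-vertices say that sum_j psi(a_j) v_j = - psi(a_O) t, and the
   row at an input vertex b_i forces psi(a_j) = 0 when the literal of i is false on x;
   so a solution with psi(a_O) <> 0 is, after rescaling, a witness of f_P(x) = 1.
   The row at a_j says that the conjugated b-values w are orthogonal to v_j, up to the
   input vertices attached to a_j; when X_j has a false literal such a vertex is free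
   and absorbs the defect.  Hence solutions with psi(b_O) <> 0 amount to vectors w
   orthogonal to every v_j with X_j true on x and with nonzero first coordinate, which
   exist iff t is not in the span of those v_j. *)

Lemma not_submx_separating_col (F : fieldType) m n (u : 'rV[F]_n) (A : 'M[F]_(m, n)) :
  ~~ (u <= A)%MS -> exists2 w : 'cV_n, A *m w = 0 & u *m w != 0.
Proof.
rewrite submxE => /matrix0Pn [i [k uCk]].
exists (cokermx A *m delta_mx k 0); first by rewrite mulmxA mulmx_coker mul0mx.
by apply/matrix0Pn; exists i, 0; rewrite mulmxA -colE mxE.
Qed.

Lemma conj_trmx_mul (C : numClosedFieldType) k (u w : 'cV[C]_k) :
  ((u^T *m w) 0 0)^* = \sum_q (u q 0)^* * (w q 0)^*.
Proof. by rewrite mxE rmorph_sum; apply: eq_bigr => q _; rewrite !mxE rmorphM. Qed.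

Section SpanProgramGraph.
Variables (C : numClosedFieldType) (n m : nat) (J : finType).
Variables (v : J -> 'cV[C]_m.+1) (X : J -> {set lit n}) (x : 'I_n -> bool).

Local Notation vertex := (vertex m X).
Local Notation VaO := (VaO m X).
Local Notation VbO := (VbO m X).
Local Notation Va := (Va m X).
Local Notation Vb := (Vb X).
Local Notation Vi := (Vi m).
Local Notation target := (@target C m).
Local Notation H := (Hx v x).

Lemma trmx_target_mul (w : 'cV[C]_m.+1) : (target^T *m w) 0 0 = w ord0 0.
Proof.
have -> : target = delta_mx ord0 0 by apply/matrixP => q k; rewrite ord1 !mxE andbT.
by rewrite trmx_delta -rowE mxE.
Qed.

Lemma sum_vertex (F : vertex -> C) :
  \sum_u F u = F VaO + F VbO + \sum_j F (Va j) + \sum_c F (Vb c) + \sum_i F (Vi i).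
Proof.
rewrite (reindex (@vertex_dec n m J X)) /=; last first.
  by exists (@vertex_enc n m J X) => [[[[[]|]|]|]|] // [].
by rewrite !big_sumType /= big_bool.
Qed.

Definition bvert (q : 'I_m.+1) : vertex :=
  if unlift ord0 q is Some c then Vb c else VbO.

Lemma bvert0 : bvert ord0 = VbO. Proof. by rewrite /bvert unlift_none. Qed.
Lemma bvert_lift c : bvert (lift ord0 c) = Vb c. Proof. by rewrite /bvert liftK. Qed.

Definition kept_edge (i : Iset X) (j : J) : bool :=
  (tag i == j) && ~~ lit_true x (val (tagged i)).

Definition has_false_lit (j : J) : bool := [exists l in X j, ~~ lit_true x l].

Lemma has_false_litP j : reflect (exists i, kept_edge i j) (has_false_lit j).
Proof.
apply: (iffP exists_inP) => [[l Xl xl]|[[j' [l Xl]] /andP[/eqP/= <- xl]]].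
  by exists (existT _ j (exist _ l Xl)); rewrite /kept_edge eqxx.
by exists l.
Qed.

Lemma Hx_bvert_sum (psi : vertex -> C) q :
  \sum_u H (bvert q) u * psi u = (psi VaO *: target + \sum_j psi (Va j) *: v j) q 0.
Proof.
rewrite !mxE summxE (eq_bigr (fun j => v j q 0 * psi (Va j))); last first.
  by move=> j _; rewrite mxE mulrC.
rewrite sum_vertex /bvert.
by case: unliftP => [c ->|->] /=;
  rewrite -!mulr_sumr !(mul0r, mulr0, add0r, addr0, mul1r, mulr1).
Qed.

Lemma Hx_Va_sum (psi : vertex -> C) j :
  \sum_u H (Va j) u * psi u =
  \sum_q (v j q 0)^* * psi (bvert q) + \sum_(i | kept_edge i j) psi (Vi i).
Proof.
rewrite sum_vertex /= -!mulr_sumr !mul0r add0r addr0 big_ord_recl bvert0.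
rewrite [X in _ = _ + X]big_mkcond /=; congr (_ + _ + _).
  by apply: eq_bigr => c _; rewrite bvert_lift.
by apply: eq_bigr => i _; rewrite /kept_edge; case: ifP; rewrite ?conjC1 ?mul1r ?mul0r.
Qed.

Lemma Hx_Vi_sum (psi : vertex -> C) i :
  \sum_u H (Vi i) u * psi u = if lit_true x (val (tagged i)) then 0 else psi (Va (tag i)).
Proof.
rewrite sum_vertex /= -!mulr_sumr !mul0r !add0r addr0 (bigD1 (tag i)) //= eqxx /=.
rewrite big1 ?addr0 => [|j /negbTE]; last by rewrite eq_sym => ->; rewrite mul0r.
by case: (lit_true _ _); rewrite ?mul1r ?mul0r.
Qed.

Lemma solvesP (psi : vertex -> C) :
  solves v x psi <->
  [/\ psi VaO *: target + \sum_j psi (Va j) *: v j = 0,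
      forall j, \sum_q (v j q 0)^* * psi (bvert q) + \sum_(i | kept_edge i j) psi (Vi i) = 0
    & forall i : Iset X, ~~ lit_true x (val (tagged i)) -> psi (Va (tag i)) = 0].
Proof.
split=> [sol|[bsol asol isol]].
  split=> [|j|i xi].
  - apply/matrixP => q k; rewrite ord1 -Hx_bvert_sum mxE sol //.
    by rewrite /bvert; case: unlift.
  - by rewrite -Hx_Va_sum sol.
  - by have := sol (Vi i) isT; rewrite Hx_Vi_sum (negbTE xi).
case=> [//|_|j _|c _|i _].
- by rewrite -bvert0 Hx_bvert_sum bsol mxE.
- by rewrite Hx_Va_sum asol.
- by rewrite -bvert_lift Hx_bvert_sum bsol mxE.
- by rewrite Hx_Vi_sum; case: ifPn => // /isol.
Qed.

Lemma solution_aO_fP (psi : vertex -> C) :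
  solves v x psi -> psi VaO != 0 -> fP v X x.
Proof.
case/solvesP=> bsol _ isol psiO.
exists (fun j => - psi (Va j) / psi VaO).
split=> [|j /has_false_litP [i /andP[/eqP <- xi]]].
  have -> : \sum_j (- psi (Va j) / psi VaO) *: v j =
            - (psi VaO)^-1 *: \sum_j psi (Va j) *: v j.
    by rewrite scaler_sumr; apply: eq_bigr => j _; rewrite scalerA mulNr mulNr mulrC.
  move/eqP: bsol; rewrite addrC addr_eq0 => /eqP ->.
  by rewrite scaleNr scalerN opprK scalerA mulVf // scale1r.
by rewrite isol // oppr0 mul0r.
Qed.

Lemma fP_solution_aO :
  fP v X x -> exists psi : vertex -> C, solves v x psi /\ psi VaO != 0.
Proof.
case=> a [span a0].
exists (fun u => match u with Defs.VaO => 1 | Defs.Va j => - a j | _ => 0 end).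
split; last exact: oner_neq0.
apply/solvesP; split=> [|j|i xi] /=.
- by under eq_bigr do rewrite scaleNr; rewrite sumrN span scale1r subrr.
- rewrite big1 ?add0r ?big1 // => q _.
  by rewrite /bvert; case: (unlift _ _); rewrite mulr0.
- by rewrite a0 ?oppr0 //; apply/has_false_litP; exists i; rewrite /kept_edge eqxx.
Qed.

Lemma solution_bO_not_fP (psi : vertex -> C) :
  solves v x psi -> psi VbO != 0 -> ~ fP v X x.
Proof.
case/solvesP=> _ asol _ psiO [a [span a0]].
pose w := \col_q (psi (bvert q))^*.
have vw j : ~~ has_false_lit j -> ((v j)^T *m w) 0 0 = 0.
  move=> hj; rewrite -[LHS]conjCK conj_trmx_mul; under eq_bigr do rewrite mxE conjCK.
  have := asol j; rewrite [X in _ + X]big_pred0 ?addr0 => [->|i]; first exact: conjC0.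
  by apply: contraNF hj => ki; apply/has_false_litP; exists i.
have : (target^T *m w) 0 0 = 0.
  rewrite -span linear_sum mulmx_suml summxE big1 // => j _.
  rewrite linearZ -scalemxAl mxE.
  by have [/a0 ->|/vw ->] := boolP (has_false_lit j); rewrite ?mul0r ?mulr0.
by rewrite trmx_target_mul mxE bvert0 => /eqP; rewrite conjC_eq0; apply/negP.
Qed.

Lemma submx_target_fP :
  (target^T <= \sum_(j | ~~ has_false_lit j) <<(v j)^T>>%MS)%MS -> fP v X x.
Proof.
case/sub_sumsmxP=> u span.
have /fin_all_exists [d ud] j : exists d, u j *m <<(v j)^T>>%MS = d *: (v j)^T.
  have /submxP[e ->] : (u j *m <<(v j)^T>>%MS <= (v j)^T)%MS.
    by apply: submx_trans (submxMl _ _) _; rewrite genmxE.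
  by exists (e 0 0); rewrite {1}[e]mx11_scalar mul_scalar_mx.
exists (fun j => if has_false_lit j then 0 else d j).
split=> [|j]; last by rewrite /has_false_lit => ->.
rewrite -[target]trmxK span linear_sum [RHS]big_mkcond; apply: eq_bigr => j _ /=.
by case: (has_false_lit j); rewrite /= ?scale0r // ud linearZ /= trmxK.
Qed.

Lemma not_fP_solution_bO :
  ~ fP v X x -> exists psi : vertex -> C, solves v x psi /\ psi VbO != 0.
Proof.
move=> nfP.
have /not_submx_separating_col [w Sw tw] :
    ~~ (target^T <= \sum_(j | ~~ has_false_lit j) <<(v j)^T>>%MS)%MS.
  by apply/negP => /submx_target_fP/nfP.
have w0 : w ord0 0 != 0.
  rewrite -trmx_target_mul; apply: contraNneq tw => tw0.
  by apply/eqP/matrixP => ? ?; rewrite !ord1 tw0 mxE.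
have vw j : ~~ has_false_lit j -> (v j)^T *m w = 0.
  move/sub_kermxP/sumsmx_subP: Sw => Sw hj; apply/sub_kermxP.
  by rewrite -genmxE Sw.
(* Every a_j with a false literal cancels its defect s j (which vanishes for the
   other a_j by vw) through one chosen input vertex. *)
pose s j := \sum_q (v j q 0)^* * (w q 0)^*.
pose e j := [pick i | kept_edge i j].
pose psi u := match u with
  | Defs.VbO => (w ord0 0)^* | Defs.Vb c => (w (lift ord0 c) 0)^*
  | Defs.Vi i => if e (tag i) == Some i then - s (tag i) else 0 | _ => 0 end.
have psib q : psi (bvert q) = (w q 0)^*.
  by case: (unliftP ord0 q) => [c|] ->; rewrite ?bvert_lift ?bvert0.
exists psi; split; last by rewrite conjC_eq0.
apply/solvesP; split=> [|j|//].
  by rewrite scale0r add0r big1 // => j _; rewrite scale0r.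
under eq_bigr do rewrite psib; rewrite -/(s j).
have [hj|hj] := boolP (has_false_lit j); last first.
  rewrite /s -conj_trmx_mul vw // mxE conjC0 add0r big_pred0 // => i.
  by apply: contraNF hj => ki; apply/has_false_litP; exists i.
have [i0 ki0 ej] : exists2 i0, kept_edge i0 j & e j = Some i0.
  rewrite /e; case: pickP => [i0 ki0|none]; first by exists i0.
  by case/has_false_litP: hj => i; rewrite none.
rewrite (bigD1 i0) //= big1 ?addr0 => [|i /andP[/andP[/eqP ij _] ni]].
  by rewrite (eqP (andP ki0).1) ej eqxx addrN.
by rewrite ij ej (inj_eq Some_inj) eq_sym (negbTE ni).
Qed.

End SpanProgramGraph.

Theorem theorem2p5 (R : realType) (n m : nat) (J : finType)
    (v : J -> 'cV[R[i]]_m.+1) (X : J -> {set lit n}) (x : 'I_n -> bool) :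
  ((exists psi : vertex m X -> R[i],
       solves (X:=X) v x psi /\ psi (VaO m X) != 0) <-> fP v X x) /\
  ((exists psi : vertex m X -> R[i],
       solves (X:=X) v x psi /\ psi (VbO m X) != 0) <-> ~ fP v X x).
Proof.
split; split.
- by case=> psi [sol psiO]; exact: solution_aO_fP sol psiO.
- exact: fP_solution_aO.
- by case=> psi [sol psiO]; exact: solution_bO_not_fP sol psiO.
- exact: not_fP_solution_bO.
Qed.
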